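(* Let $X$ be a real linear space, $T$ an infinite index set, and $f, f_t : X \to \overline{\mathbb{R}} := \mathbb{R}\cup\{\pm\infty\}$ ($t \in T$) convex proper functions. Let $M := \bigcap_{t\in T} \operatorname{dom} f_t$. Let $v:\mathbb{R}^T\to\overline{\mathbb{R}}$ be $v(y) := \inf\{f(x) : f_t(x)\le y_t \text{ for all } t\in T\}$, where $\mathbb{R}^T$ carries the product topology, and let $\overline{v}$ denote the lower semicontinuous hull of $v$, so that $\overline{v}(0_Y) = \sup_{V} \inf_{y\in V} v(y)$, the supremum being over all neighborhoods $V$ of the origin $0_Y$ of $\mathbb{R}^T$. Let $$\sup(D) := \sup_{\lambda\in\mathbb{R}_+^{(T)}} \inf_{x\in M}\Big(f(x)+\sum_{t\in T}\lambda_t f_t(x)\Big).$$ Assume that either $\overline{v}(0_Y)\neq+\infty$ or $\sup(D)\neq-\infty$. Then $$\sup(D) = \sup_{\varepsilon>0,\ H\in\mathcal{F}(T)} \ \inf_{x\in M}\{ f(x) : f_t(x)\le\varepsilon \text{ for all } t\in H\}.$$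
   Context: $\operatorname{dom} g := \{x : g(x)<+\infty\}$; a proper function never takes the value $-\infty$ and has nonempty domain. $\mathbb{R}^{(T)}$ is the space of functions $\lambda=(\lambda_t)_{t\in T}:T\to\mathbb{R}$ with finite support $\operatorname{supp}\lambda=\{t:\lambda_t\neq0\}$, and $\mathbb{R}^{(T)}_+$ its elements with all $\lambda_t\ge0$; $\sum_{t\in T}\lambda_t f_t(x)$ means $\sum_{t\in\operatorname{supp}\lambda}\lambda_t f_t(x)$ if $\lambda\ne 0$ and $0$ if $\lambda=0$. $\mathcal{F}(T)$ is the family of nonempty finite subsets of $T$. Conventions: $\inf\emptyset=+\infty$, $\sup\emptyset=-\infty$. *)

From HB Require Import structures.
From mathcomp Require Import all_boot all_order all_algebra.
From mathcomp Require Import all_classical all_reals all_analysis.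
Set Implicit Arguments. Unset Strict Implicit. Unset Printing Implicit Defensive.
Import Order.TTheory GRing.Theory Num.Theory numFieldNormedType.Exports.
Local Open Scope classical_set_scope.
Local Open Scope ring_scope.
Local Open Scope ereal_scope.

Definition edom (R : realType) (X : Type) (g : X -> \bar R) : set X :=
  [set x | g x < +oo].

Definition eproper (R : realType) (X : Type) (g : X -> \bar R) : Prop :=
  (forall x, g x != -oo) /\ (exists x, g x < +oo).

Definition econvex (R : realType) (X : lmodType R) (g : X -> \bar R) : Prop :=
  forall (x y : X) (l : R), (0 < l)%R -> (l < 1)%R ->
    g (l *: x + (1 - l) *: y)%R <= l%:E * g x + (1 - l)%:E * g y.

Definition valfun (R : realType) (X : Type) (T : choiceType)
  (f : X -> \bar R) (ft : T -> X -> \bar R) (y : T -> R) : \bar R :=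
  ereal_inf [set f x | x in [set x | forall t, ft t x <= (y t)%:E]].

Definition vbar0 (R : realType) (X : Type) (T : choiceType)
  (f : X -> \bar R) (ft : T -> X -> \bar R) : \bar R :=
  ereal_sup [set ereal_inf (@valfun R X T f ft @` V) |
               V in nbhs ((fun _ : T => 0%R) : {ptws T -> R})].

Definition fin_supp_nonneg (R : realType) (T : choiceType) : set (T -> R) :=
  [set l | finite_set [set t | l t != 0%R] /\ forall t, (0 <= l t)%R].

Definition Mdom (R : realType) (X : Type) (T : choiceType)
  (ft : T -> X -> \bar R) : set X := \bigcap_(t in [set: T]) edom (ft t).

Definition supD (R : realType) (X : Type) (T : choiceType)
  (f : X -> \bar R) (ft : T -> X -> \bar R) : \bar R :=
  ereal_sup [set ereal_inf [set f x + \sum_(t \in [set t | l t != 0%R]) (l t)%:E * ft t x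
                            | x in Mdom ft]
            | l in @fin_supp_nonneg R T].

Definition supFinPert (R : realType) (X : Type) (T : choiceType)
  (f : X -> \bar R) (ft : T -> X -> \bar R) : \bar R :=
  ereal_sup [set z | exists (eps : R) (H : set T),
    [/\ (0 < eps)%R, finite_set H, H !=set0 &
        z = ereal_inf [set f x | x in [set x | Mdom ft x /\
                                     (forall t, H t -> ft t x <= eps%:E)]]]].

From HB Require Import structures.
From mathcomp Require Import all_boot all_order all_algebra.
From mathcomp Require Import all_classical all_reals all_analysis.
From mathcomp Require Import lra.
Set Implicit Arguments. Unset Strict Implicit. Unset Printing Implicit Defensive.
Import Order.TTheory GRing.Theory Num.Theory numFieldNormedType.Exports.
Local Open Scope classical_set_scope.
Local Open Scope ring_scope.

(* If sup(D) < r < inf {f x | x in M, f_t x <= eps on H}, the convex system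
   f - r <= 0, f_t - eps <= 0 (t in H) has no solution on M /\ dom f.  A theorem
   of the alternative for convexlike systems, obtained from a finite-dimensional
   Hahn-Banach argument, yields multipliers c_N, c_t >= 0, not all zero, with
   c_N (f - r) + sum c_t (f_t - eps) >= 0 on M /\ dom f.  If c_N > 0, then
   lambda = c / c_N has dual value >= r, which is absurd.  If c_N = 0, then
   sum c_t f_t >= eps sum c_t > 0 on M /\ dom f: this forces v = +oo near the
   origin, so vbar(0) = +oo, and makes the dual unbounded (adding large multiples
   of c to any lambda) as soon as sup(D) > -oo, contradicting the hypothesis.
   The converse inequality only needs sum lambda_t f_t <= eps sum lambda_t on the
   perturbed feasible set. *)

Section FiniteHahnBanach.
Variables (R : realType) (I : eqType) (p : (I -> R) -> R).
Hypothesis p_subadd : forall a b, p (a + b) <= p a + p b.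
Hypothesis p_homo : forall (s : R) a, 0 < s -> s * p a <= p (s *: a).

Definition supported_on (hs : seq I) (a : I -> R) := forall i, i \notin hs -> a i = 0.

Definition seqdot (hs : seq I) (c a : I -> R) := \sum_(i <- hs) a i * c i.

Lemma seqdotD hs c a b : seqdot hs c (a + b) = seqdot hs c a + seqdot hs c b.
Proof. by rewrite /seqdot -big_split; apply: eq_bigr => i _; rewrite mulrDl. Qed.

Lemma seqdotZ hs c (s : R) a : seqdot hs c (s *: a) = s * seqdot hs c a.
Proof. by rewrite /seqdot mulr_sumr; apply: eq_bigr => i _; rewrite mulrA. Qed.

Lemma supported_onD hs a b : supported_on hs a -> supported_on hs b ->
  supported_on hs (a + b).
Proof. by move=> ha hb i hi; rewrite addrfctE /= ha ?hb ?addr0. Qed.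

Lemma supported_onZ hs (s : R) a : supported_on hs a -> supported_on hs (s *: a).
Proof. by move=> ha i hi; rewrite scalrfctE /= ha ?scaler0. Qed.

Lemma sublinear_ge0_at0 : 0 <= p 0.
Proof. by have := p_subadd 0 0; rewrite addr0; lra. Qed.

Lemma hahn_banach_step hs c j : j \notin hs ->
  (forall a, supported_on hs a -> seqdot hs c a <= p a) ->
  exists cj : R, forall b, supported_on hs b -> forall t : R,
    seqdot hs c b + t * cj <= p (b + t *: (fun i => (i == j)%:R)).
Proof.
move=> jhs c_le; set e : I -> R := fun i => (i == j)%:R.
pose A := [set p (b + e) - seqdot hs c b | b in supported_on hs].
have A_lb b' : supported_on hs b' -> lbound A (seqdot hs c b' - p (b' - e)).
  move=> hb' _ [b hb <-].
  have := c_le _ (supported_onD hb' hb); rewrite seqdotD.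
  have := p_subadd (b' - e) (b + e); rewrite addrACA addNr addr0; lra.
have A_neq0 : A !=set0 by exists (p (0 + e) - seqdot hs c 0), 0.
have A_hlb : has_lbound A.
  by exists (seqdot hs c 0 - p (0 - e)); apply: A_lb.
have cj_lb b : supported_on hs b -> seqdot hs c b + inf A <= p (b + e).
  move=> hb; have : inf A <= p (b + e) - seqdot hs c b by apply: (ge_inf A_hlb); exists b.
  lra.
have cj_ub b : supported_on hs b -> seqdot hs c b - inf A <= p (b - e).
  by move=> hb; have := lb_le_inf A_neq0 (A_lb _ hb); lra.
exists (inf A) => b hb t.
have [t_lt0|t_gt0|->] := ltgtP t 0; last first.
- by rewrite mul0r addr0 scale0r addr0; exact: c_le.
- have := @p_homo t (t^-1 *: b + e) t_gt0.
  rewrite scalerDr scalerA mulfV ?gt_eqF // scale1r.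
  have := cj_lb _ (supported_onZ t^-1 hb); rewrite seqdotZ.
  rewrite -(ler_pM2l t_gt0) mulrDr mulrA mulfV ?gt_eqF // mul1r; lra.
- have s_gt0 : 0 < - t by rewrite oppr_gt0.
  have := @p_homo (- t) ((- t)^-1 *: b - e) s_gt0.
  rewrite scalerBr scalerA mulfV ?gt_eqF // scale1r scaleNr opprK.
  have := cj_ub _ (supported_onZ (- t)^-1 hb); rewrite seqdotZ.
  rewrite -(ler_pM2l s_gt0) mulrBr mulrA mulfV ?gt_eqF // mul1r; lra.
Qed.

Lemma hahn_banach_finite hs : uniq hs ->
  exists c, forall a, supported_on hs a -> seqdot hs c a <= p a.
Proof.
elim: hs => [_|j hs IH /= /andP[jhs /IH[c c_le]]].
  exists 0 => a a0; rewrite /seqdot big_nil.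
  have -> : a = 0 by apply/funext => i; exact: a0.
  exact: sublinear_ge0_at0.
have [cj cj_le] := hahn_banach_step jhs c_le.
exists (fun i => if i == j then cj else c i) => a ha.
pose b i := if i \in hs then a i else 0.
have hb : supported_on hs b by move=> i /negbTE hi; rewrite /b hi.
have -> : a = b + a j *: (fun i => (i == j)%:R).
  apply/funext => i; rewrite addrfctE scalrfctE /b -[_ *: _]/(_ * _) /=.
  have [->|ij] := eqVneq i j; first by rewrite (negbTE jhs) add0r mulr1.
  by rewrite mulr0 addr0; case: ifP => [//|ihs]; rewrite ha // inE (negbTE ij) ihs.
apply: le_trans (cj_le _ hb (a j)); rewrite /seqdot big_cons eqxx addrC !fctE /=.
rewrite eqxx {2}/b (negbTE jhs) add0r -[a j *: _]/(a j * 1) mulr1 lerD2r.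
rewrite (eq_big_seq (fun i => b i * c i)) // => i ihs.
have /negbTE ij : i != j by apply: contraNneq jhs => <-.
by rewrite ij -[_ *: _]/(_ * 0) mulr0 addr0.
Qed.

End FiniteHahnBanach.

Lemma ler_sum_norm (R : realDomainType) (I : eqType) (s : seq I) (v : I -> R) i :
  i \in s -> v i <= \sum_(j <- s) `|v j|.
Proof.
move=> si; rewrite (big_rem i) //=; apply: le_trans (ler_norm _) _.
by rewrite lerDl sumr_ge0.
Qed.

Section ConvexlikeAlternative.
Variables (R : realType) (I : eqType) (X : Type) (D : set X) (k : X -> I -> R).
Variables (idx : seq I) (x0 : X).
Hypothesis D_convexlike : forall x1 x2, D x1 -> D x2 -> forall th : R, 0 < th -> th < 1 ->
  exists2 x, D x & forall i, i \in idx -> k x i <= th * k x1 i + (1 - th) * k x2 i.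
Hypothesis idx_uniq : uniq idx.
Hypothesis Dx0 : D x0.
Hypothesis no_solution : forall x, D x -> exists2 i, i \in idx & 0 < k x i.

(* [gauge z] is the gauge, in the direction of the constant vector 1, of the
   convex cone generated by k(D) and the nonnegative orthant, translated by z.
   It is sublinear, and the alternative is read off a linear minorant of it. *)
Definition gauge_set (z : I -> R) := [set s : R | exists t x, [/\ 0 < t, D x &
  forall i, i \in idx -> t * k x i <= s - z i]].

Definition gauge z := inf (gauge_set z).

Lemma small_multiple (d : R) : 0 < d ->
  exists2 t, 0 < t & forall i, i \in idx -> t * k x0 i <= d.
Proof.
move=> d_gt0; set N := \sum_(i <- idx) `|k x0 i|.
have N_ge0 : 0 <= N by rewrite sumr_ge0.
exists (d / (1 + N)) => [|i i_idx]; first by rewrite divr_gt0 // ltr_pwDl.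
have := ler_sum_norm (k x0) i_idx; rewrite -/N => kN.
rewrite mulrAC ler_pdivrMr ?ltr_pwDl //; nra.
Qed.

Lemma gauge_set_neq0 z : gauge_set z !=set0.
Proof.
have [t t_gt0 kt] := small_multiple ltr01.
exists (1 + \sum_(i <- idx) `|z i|), t, x0; split => // i i_idx.
by have := ler_sum_norm z i_idx; have := kt i i_idx; lra.
Qed.

Lemma gauge_setD z1 z2 s1 s2 : gauge_set z1 s1 -> gauge_set z2 s2 ->
  gauge_set (z1 + z2) (s1 + s2).
Proof.
move=> [t1 [x1 [t1_gt0 Dx1 h1]]] [t2 [x2 [t2_gt0 Dx2 h2]]].
have t_gt0 : 0 < t1 + t2 by rewrite addr_gt0.
set th := t1 / (t1 + t2).
have th_gt0 : 0 < th by rewrite divr_gt0.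
have th_lt1 : th < 1 by rewrite ltr_pdivrMr // mul1r ltrDl.
have [x Dx hx] := D_convexlike Dx1 Dx2 th_gt0 th_lt1.
exists (t1 + t2), x; split => // i i_idx; rewrite addrfctE.
have e1 : (t1 + t2) * th = t1 by rewrite mulrC divfK ?gt_eqF.
have e2 : (t1 + t2) * (1 - th) = t2 by rewrite mulrBr mulr1 e1; lra.
have hk := hx i i_idx; rewrite -(ler_pM2l t_gt0) mulrDr in hk.
rewrite [_ * (th * _)]mulrA [_ * ((1 - th) * _)]mulrA e1 e2 in hk.
by have := h1 i i_idx; have := h2 i i_idx; lra.
Qed.

Lemma gauge_setZ z (a s : R) : 0 < a -> gauge_set (a *: z) s -> gauge_set z (s / a).
Proof.
move=> a_gt0 [t [x [t_gt0 Dx h]]]; exists (t / a), x; split; rewrite ?divr_gt0 //.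
move=> i i_idx; have := h i i_idx; rewrite scalrfctE -[_ *: _]/(_ * _) => hz.
by rewrite mulrAC ler_pdivrMr // mulrBl divfK ?gt_eqF //; lra.
Qed.

Lemma gauge_set0_gt0 s : gauge_set 0 s -> 0 < s.
Proof.
move=> [t [x [t_gt0 Dx ht]]].
have [i i_idx ki] := no_solution Dx.
by have := ht i i_idx; have := mulr_gt0 t_gt0 ki; rewrite subr0; lra.
Qed.

Lemma gauge_set_lbound z : has_lbound (gauge_set z).
Proof.
have [s' hs'] := gauge_set_neq0 (- z).
exists (- s') => s hs; have := gauge_setD hs hs'.
by rewrite subrr => /gauge_set0_gt0; lra.
Qed.

Lemma gauge_le z s : gauge_set z s -> gauge z <= s.
Proof. exact/ge_inf/gauge_set_lbound. Qed.

Lemma gauge_le_max z (s : R) : (forall i, i \in idx -> z i <= s) -> gauge z <= s.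
Proof.
move=> zs; apply/ler_addgt0Pr => d d_gt0; apply: gauge_le.
have [t t_gt0 kt] := small_multiple d_gt0.
exists t, x0; split => // i i_idx.
by have := zs i i_idx; have := kt i i_idx; lra.
Qed.

Lemma gauge_subadd a b : gauge (a + b) <= gauge a + gauge b.
Proof.
suff : gauge (a + b) - gauge a <= gauge b by lra.
apply: lb_le_inf (gauge_set_neq0 b) _ => s2 hs2.
suff : gauge (a + b) - s2 <= gauge a by lra.
apply: lb_le_inf (gauge_set_neq0 a) _ => s1 hs1.
by have := gauge_le (gauge_setD hs1 hs2); lra.
Qed.

Lemma gauge_homo (s : R) a : 0 < s -> s * gauge a <= gauge (s *: a).
Proof.
move=> s_gt0; apply: lb_le_inf (gauge_set_neq0 _) _ => s' hs'.
by rewrite mulrC -ler_pdivlMr //; exact: gauge_le (gauge_setZ s_gt0 hs').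
Qed.

Theorem convexlike_alternative : exists c : I -> R,
  [/\ forall i, i \in idx -> 0 <= c i, 0 < \sum_(i <- idx) c i &
      forall x, D x -> 0 <= \sum_(i <- idx) c i * k x i].
Proof.
have [c c_le] := hahn_banach_finite gauge_subadd gauge_homo idx_uniq.
exists c; split.
- move=> j jidx; pose a i : R := - (i == j)%:R.
  have a_supp : supported_on idx a.
    by move=> i iidx; rewrite /a (negbTE (contraNneq _ iidx)) ?oppr0 // => ->.
  have a_le0 : gauge a <= 0 by apply: gauge_le_max => i _; rewrite oppr_le0 ler0n.
  have := le_trans (c_le _ a_supp) a_le0.
  rewrite /seqdot (bigD1_seq j) //= big1 => [|i /negbTE ij]; last by rewrite /a ij oppr0 mul0r.
  by rewrite /a eqxx mulN1r addr0 oppr_le0.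
- pose a i : R := if i \in idx then -1 else 0.
  have a_supp : supported_on idx a by move=> i /negbTE iidx; rewrite /a iidx.
  have a_le : gauge a <= -1 by apply: gauge_le_max => i iidx; rewrite /a iidx.
  have := le_trans (c_le _ a_supp) a_le.
  rewrite /seqdot (eq_big_seq (fun i => - c i)) => [|i iidx]; last by rewrite /a iidx mulN1r.
  by rewrite sumrN; lra.
- move=> x Dx; pose a i := if i \in idx then - k x i else 0.
  have a_supp : supported_on idx a by move=> i /negbTE iidx; rewrite /a iidx.
  have a_gauge : gauge_set a 0.
    by exists 1, x; split => // i iidx; rewrite /a iidx mul1r sub0r opprK.
  have := le_trans (c_le _ a_supp) (gauge_le a_gauge).
  rewrite /seqdot (eq_big_seq (fun i => - (c i * k x i))) => [|i iidx]; last by rewrite /a iidx mulNr mulrC.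
  by rewrite sumrN oppr_le0.
Qed.

End ConvexlikeAlternative.

Lemma finite_set_enum (T : eqType) (A : set T) : finite_set A ->
  exists2 s : seq T, uniq s & A = [set` s].
Proof.
move=> /finite_seqP[s ->]; exists (undup s); first exact: undup_uniq.
by apply/seteqP; split => t /=; rewrite mem_undup.
Qed.

Lemma ptws_nbhs0_box (R : realType) (T : choiceType) (hs : seq T) (e : R) : 0 < e ->
  nbhs ((fun _ => 0) : {ptws T -> R}) [set y | forall t, t \in hs -> `|y t| < e].
Proof.
move=> e_gt0; elim: hs => [|t hs IH].
  have -> : [set y : {ptws T -> R} | forall t, t \in [::] -> `|y t| < e] = setT.
    by apply/seteqP; split => y // _ t.
  exact: filterT.
have nbhs_t : nbhs ((fun _ => 0) : {ptws T -> R}) [set y : {ptws T -> R} | `|y t| < e].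
  have cv := @proj_continuous T (fun _ => R) t (fun _ => 0).
  have hA : nbhs (0 : R) [set r : R | `|r| < e].
    by apply/nbhs_ballP; exists e => //= r; rewrite /ball /= sub0r normrN.
  exact: (cv _ hA).
apply: filterS (filterI nbhs_t IH) => y [yt yh] s; rewrite inE => /orP[/eqP ->//|]; exact: yh.
Qed.

Local Open Scope ereal_scope.

Lemma EFin_between (R : realType) (a b : \bar R) : a < b -> exists r : R, a < r%:E < b.
Proof.
case: a => [a| |]; case: b => [b| |] //= ab.
- by exists ((a + b) / 2)%R; rewrite !lte_fin in ab *; apply/andP; split; lra.
- by exists (a + 1)%R; rewrite lte_fin ltry andbT; lra.
- by exists (b - 1)%R; rewrite lte_fin ltNyr /=; lra.
- by exists 0%R; rewrite ltry ltNyr.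
Qed.

Lemma fine_proper (R : realType) (X : Type) (g : X -> \bar R) x :
  eproper g -> g x < +oo -> (fine (g x))%:E = g x.
Proof. by move=> [gN _] gx; rewrite fineK // fin_numE gN lt_eqF. Qed.

Lemma econvex_fine (R : realType) (X : lmodType R) (g : X -> \bar R) x1 x2 (th : R) :
  econvex g -> eproper g -> g x1 < +oo -> g x2 < +oo -> (0 < th)%R -> (th < 1)%R ->
  let x := (th *: x1 + (1 - th) *: x2)%R in
  g x < +oo /\ (fine (g x) <= th * fine (g x1) + (1 - th) * fine (g x2))%R.
Proof.
move=> g_convex g_proper gx1 gx2 th_gt0 th_lt1 x.
have := g_convex x1 x2 th th_gt0 th_lt1.
rewrite -(fine_proper g_proper gx1) -(fine_proper g_proper gx2) -!EFinM -EFinD => gx.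
have gx_fin : g x < +oo by apply: le_lt_trans gx (ltry _).
by rewrite -lee_fin (fine_proper g_proper gx_fin).
Qed.

Section Duality.
Variables (R : realType) (X : lmodType R) (T : choiceType).
Variables (f : X -> \bar R) (ft : T -> X -> \bar R).
Hypotheses (f_proper : eproper f) (ft_proper : forall t, eproper (ft t)).

Definition dual_value (l : T -> R) : \bar R :=
  ereal_inf [set f x + \sum_(t \in [set t | l t != 0%R]) (l t)%:E * ft t x | x in Mdom ft].

Definition domMf := [set x | Mdom ft x /\ f x < +oo].

Lemma dual_value_le_supD l : fin_supp_nonneg l -> dual_value l <= supD f ft.
Proof. by move=> hl; apply: le_ereal_sup_tmp; exists (dual_value l) => //; exists l. Qed.

Lemma fin_supp_nonneg_seq (hs : seq T) (l : T -> R) : (forall t, 0 <= l t)%R ->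
  (forall t, l t != 0%R -> t \in hs) -> fin_supp_nonneg l.
Proof. by move=> l_ge0 l_supp; split => //; apply: sub_finite_set (finite_seq hs). Qed.

Lemma MdomP x : Mdom ft x <-> forall t, ft t x < +oo.
Proof. by split => [Mx t|h t _]; [exact: Mx | exact: h]. Qed.

Lemma fsbig_Mdom (hs : seq T) (l : T -> R) x : uniq hs ->
  (forall t, l t != 0%R -> t \in hs) -> Mdom ft x ->
  \sum_(t \in [set t | l t != 0%R]) (l t)%:E * ft t x =
  (\sum_(t <- hs) l t * fine (ft t x))%:E.
Proof.
move=> hs_uniq l_supp /MdomP Mx; rewrite (fsbig_fwiden hs) //.
- by rewrite -sumEFin; apply: eq_bigr => t _; rewrite -(fine_proper (ft_proper t) (Mx t)).
- by move=> t /= [_ /negP]; rewrite negbK => /eqP ->; rewrite mul0e.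
Qed.

Lemma dual_value_ge (hs : seq T) (l : T -> R) (r : R) : uniq hs ->
  (forall t, l t != 0%R -> t \in hs) ->
  (forall x, Mdom ft x -> f x < +oo ->
     (r <= fine (f x) + \sum_(t <- hs) l t * fine (ft t x))%R) ->
  r%:E <= dual_value l.
Proof.
move=> hs_uniq l_supp r_le; apply/ereal_infP => _ [x Mx <-].
rewrite (fsbig_Mdom hs_uniq l_supp Mx).
have [->|fx] := eqVneq (f x) +oo; first by rewrite addye // leey.
rewrite -ltey in fx; rewrite -(fine_proper f_proper fx) -EFinD lee_fin; exact: r_le.
Qed.

Lemma supD_empty_dom : ~ (exists x, domMf x) -> supD f ft = +oo.
Proof.
move=> dom_empty; apply: eq_infty => r; pose l0 : T -> R := fun=> 0%R.
have l0_supp t : l0 t != 0%R -> t \in [::] by rewrite eqxx.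
have l0_ge0 t : (0 <= l0 t)%R by [].
apply: le_trans (dual_value_le_supD (fin_supp_nonneg_seq l0_ge0 l0_supp)).
apply: (dual_value_ge _ l0_supp) => // x Mx fx.
by exfalso; apply: dom_empty; exists x.
Qed.

Lemma supD_ge_scaled (hs : seq T) (c : T -> R) (cN r : R) : uniq hs ->
  (forall t, 0 <= c t)%R -> (forall t, c t != 0%R -> t \in hs) -> (0 < cN)%R ->
  (forall x, Mdom ft x -> f x < +oo ->
     (0 <= cN * (fine (f x) - r) + \sum_(t <- hs) c t * fine (ft t x))%R) ->
  r%:E <= supD f ft.
Proof.
move=> hs_uniq c_ge0 c_supp cN_gt0 c_ineq; pose l t := (c t / cN)%R.
have l_supp t : l t != 0%R -> t \in hs by rewrite mulf_eq0 negb_or => /andP[/c_supp].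
have l_ge0 t : (0 <= l t)%R by rewrite divr_ge0 // ltW.
apply: le_trans (dual_value_le_supD (fin_supp_nonneg_seq l_ge0 l_supp)).
apply: (dual_value_ge hs_uniq l_supp) => x Mx fx.
have -> : (\sum_(t <- hs) l t * fine (ft t x) =
    cN^-1 * \sum_(t <- hs) c t * fine (ft t x))%R.
  by rewrite mulr_sumr; apply: eq_bigr => t _; rewrite /l mulrAC mulrC.
rewrite -(ler_pM2l cN_gt0) mulrDr mulrA mulfV ?gt_eqF // mul1r.
by have := c_ineq x Mx fx; lra.
Qed.

Section UniformViolation.
Variables (hs : seq T) (c : T -> R) (delta : R).
Hypotheses (hs_uniq : uniq hs) (c_ge0 : forall t, (0 <= c t)%R)
  (c_supp : forall t, c t != 0%R -> t \in hs) (delta_gt0 : (0 < delta)%R).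
Hypothesis c_violation : forall x, Mdom ft x -> f x < +oo ->
  (delta <= \sum_(t <- hs) c t * fine (ft t x))%R.

Lemma vbar0_pinfty : vbar0 f ft = +oo.
Proof.
set C := (\sum_(t <- hs) c t)%R.
have C1_gt0 : (0 < C + 1)%R by rewrite ltr_wpDl ?sumr_ge0.
set e := (delta / (C + 1))%R.
have e_gt0 : (0 < e)%R by rewrite divr_gt0.
have Ce_lt : (C * e < delta)%R.
  by rewrite /e mulrA ltr_pdivrMr // mulrDr mulr1 mulrC ltrDl.
pose V := [set y : T -> R | forall t, t \in hs -> (`|y t| < e)%R].
apply/eqP; rewrite -leye_eq; apply: le_ereal_sup_tmp.
exists (ereal_inf (valfun f ft @` V)); first by exists V; first exact: ptws_nbhs0_box.
apply/ereal_infP => _ [y y_small <-]; apply/ereal_infP => _ [x x_feas <-].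
rewrite leye_eq; apply: contraT; rewrite -ltey => fx.
have Mx : Mdom ft x by apply/MdomP => t; exact: le_lt_trans (x_feas t) (ltry _).
suff : (\sum_(t <- hs) c t * fine (ft t x) <= C * e)%R.
  by have := c_violation Mx fx; lra.
rewrite /C mulr_suml big_seq [leRHS]big_seq; apply: ler_sum => t t_hs.
apply: ler_wpM2l; first exact: c_ge0.
have /MdomP/(_ t) ftx := Mx.
have := x_feas t; rewrite -(fine_proper (ft_proper t) ftx) lee_fin => ft_le.
by have := y_small t t_hs; have := ler_norm (y t); lra.
Qed.

Lemma supD_pinfty : supD f ft != -oo -> supD f ft = +oo.
Proof.
rewrite -ltNye => /ereal_sup_gt[_ [l0 l0_supp_nonneg <-]].
rewrite -/(dual_value l0) => l0_gt; have [l0_fin l0_ge0] := l0_supp_nonneg.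
have [l0_inf|l0_ninf] := eqVneq (dual_value l0) +oo.
  by apply/eqP; rewrite -leye_eq -l0_inf dual_value_le_supD.
have d_eq : (fine (dual_value l0))%:E = dual_value l0.
  by rewrite fineK // fin_numE -ltNye l0_gt.
set d := fine (dual_value l0) in d_eq.
apply: eq_infty => r; set kap := (`|r - d| / delta)%R.
have kap_ge0 : (0 <= kap)%R by rewrite divr_ge0 // ltW.
pose l t := (l0 t + kap * c t)%R.
have U_fin : finite_set ([set t | l0 t != 0%R] `|` [set` hs]).
  by rewrite finite_setU.
have [hs' hs'_uniq hs'E] := finite_set_enum U_fin.
have in_hs' t : l0 t != 0%R \/ t \in hs -> t \in hs'.
  by move=> ht; have : ([set t | l0 t != 0%R] `|` [set` hs]) t by []; rewrite hs'E.
have l0_supp t : l0 t != 0%R -> t \in hs' by move=> ?; apply: in_hs'; left.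
have c_supp' t : c t != 0%R -> t \in hs' by move=> /c_supp ?; apply: in_hs'; right.
have l_supp t : l t != 0%R -> t \in hs'.
  have [/c_supp' //|c0] := boolP (c t != 0%R).
  by rewrite /l (eqP (negPn c0)) mulr0 addr0 => /l0_supp.
have l_ge0 t : (0 <= l t)%R := addr_ge0 (l0_ge0 t) (mulr_ge0 kap_ge0 (c_ge0 t)).
apply: le_trans (dual_value_le_supD (fin_supp_nonneg_seq l_ge0 l_supp)).
apply: (dual_value_ge hs'_uniq l_supp) => x Mx fx.
have l0_le : (d <= fine (f x) + \sum_(t <- hs') l0 t * fine (ft t x))%R.
  rewrite -lee_fin d_eq EFinD (fine_proper f_proper fx).
  rewrite -(fsbig_Mdom hs'_uniq l0_supp Mx).
  by apply: ge_ereal_inf; eexists; [exists x | exact: lexx].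
have c_le : (delta <= \sum_(t <- hs') c t * fine (ft t x))%R.
  have := c_violation Mx fx; congr (_ <= _)%R; apply: EFin_inj.
  by rewrite -(fsbig_Mdom hs_uniq c_supp Mx) -(fsbig_Mdom hs'_uniq c_supp' Mx).
have -> : (\sum_(t <- hs') l t * fine (ft t x) =
    \sum_(t <- hs') l0 t * fine (ft t x) + kap * \sum_(t <- hs') c t * fine (ft t x))%R.
  by rewrite mulr_sumr -big_split; apply: eq_bigr => t _; rewrite mulrDl mulrA.
have kap_delta : (kap * delta = `|r - d|)%R by rewrite divfK ?gt_eqF.
have := ler_wpM2l kap_ge0 c_le; have := ler_norm (r - d); lra.
Qed.

End UniformViolation.

Hypotheses (f_convex : econvex f) (ft_convex : forall t, econvex (ft t)).

Definition perturbed_gap (eps r : R) x (i : option T) : R :=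
  if i is Some t then (fine (ft t x) - eps)%R else (fine (f x) - r)%R.

Lemma perturbed_gap_convex eps r x1 x2 (th : R) : domMf x1 -> domMf x2 ->
  (0 < th)%R -> (th < 1)%R ->
  let x := (th *: x1 + (1 - th) *: x2)%R in
  domMf x /\ forall i, (perturbed_gap eps r x i <=
    th * perturbed_gap eps r x1 i + (1 - th) * perturbed_gap eps r x2 i)%R.
Proof.
move=> [/MdomP M1 f1] [/MdomP M2 f2] th_gt0 th_lt1 x.
have ft_conv t := econvex_fine (ft_convex t) (ft_proper t) (M1 t) (M2 t) th_gt0 th_lt1.
have [fx fx_le] := econvex_fine f_convex f_proper f1 f2 th_gt0 th_lt1.
split; first by split => //; apply/MdomP => t; case: (ft_conv t).
by move=> [t|] /=; [case: (ft_conv t) => _ | ]; lra.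
Qed.

Lemma perturbed_gap_pos (hs : seq T) (eps r : R) :
  (forall x, Mdom ft x -> f x < +oo ->
     (forall t, t \in hs -> ft t x <= eps%:E) -> r%:E < f x) ->
  forall x, domMf x ->
    exists2 i, i \in None :: map Some hs & (0 < perturbed_gap eps r x i)%R.
Proof.
move=> feasible_gt x [Mx fx]; have [r_lt|F_le] := ltrP r (fine (f x)).
  by exists None; rewrite ?mem_head //= subr_gt0.
have [[t t_hs t_gt]|no_t] := pselect (exists2 t, t \in hs & (eps < fine (ft t x))%R).
  by exists (Some t); rewrite ?inE ?mem_map ?t_hs ?orbT //= ?subr_gt0 // => ? ? [].
suff : r%:E < f x by rewrite -(fine_proper f_proper fx) lte_fin ltNge F_le.
apply: feasible_gt => // t t_hs; have /MdomP/(_ t) ftx := Mx.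
rewrite -(fine_proper (ft_proper t) ftx) lee_fin leNgt.
by apply/negP => t_gt; apply: no_t; exists t.
Qed.

Lemma perturbed_alternative (hs : seq T) (eps r : R) x0 : uniq hs -> domMf x0 ->
  (forall x, Mdom ft x -> f x < +oo ->
     (forall t, t \in hs -> ft t x <= eps%:E) -> r%:E < f x) ->
  exists (cN : R) (c : T -> R),
    [/\ (0 <= cN)%R, forall t, (0 <= c t)%R, forall t, c t != 0%R -> t \in hs,
        (0 < cN + \sum_(t <- hs) c t)%R &
        forall x, Mdom ft x -> f x < +oo ->
          (0 <= cN * (fine (f x) - r) + \sum_(t <- hs) c t * (fine (ft t x) - eps))%R].
Proof.
move=> hs_uniq Dx0 feasible_gt; pose idx := None :: map Some hs.
have Some_idx t : (Some t \in idx) = (t \in hs) by rewrite inE /= mem_map // => ? ? [].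
have idx_uniq : uniq idx.
  rewrite /= map_inj_uniq ?hs_uniq ?andbT; last by move=> ? ? [].
  by apply/negP => /mapP[].
have D_convexlike x1 x2 : domMf x1 -> domMf x2 -> forall th : R, (0 < th)%R -> (th < 1)%R ->
    exists2 x, domMf x & forall i, i \in idx -> (perturbed_gap eps r x i <=
      th * perturbed_gap eps r x1 i + (1 - th) * perturbed_gap eps r x2 i)%R.
  move=> D1 D2 th th_gt0 th_lt1.
  have [Dx gap_le] := perturbed_gap_convex eps r D1 D2 th_gt0 th_lt1.
  by exists (th *: x1 + (1 - th) *: x2)%R => // i _; exact: gap_le.
have [c [c_ge0 c_sum c_D]] :=
  convexlike_alternative D_convexlike idx_uniq Dx0 (perturbed_gap_pos feasible_gt).
exists (c None), (fun t => if t \in hs then c (Some t) else 0%R); split.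
- exact/c_ge0/mem_head.
- by move=> t; case: ifP => // t_hs; rewrite c_ge0 ?Some_idx.
- by move=> t; case: ifP => //; rewrite eqxx.
- rewrite (eq_big_seq (fun t => c (Some t))) => [|t ->] //.
  by move: c_sum; rewrite big_cons big_map.
- move=> x Mx fx; rewrite (eq_big_seq (fun t => c (Some t) * perturbed_gap eps r x (Some t))%R) => [|t ->] //.
  by move: (c_D x (conj Mx fx)); rewrite big_cons big_map.
Qed.

Lemma supD_le_supFinPert (t0 : T) : supD f ft <= supFinPert f ft.
Proof.
apply: ge_ereal_sup => _ [l [l_fin l_ge0] <-]; rewrite -/(dual_value l).
have [hs hs_uniq hsE] := finite_set_enum l_fin.
have l_supp t : l t != 0%R -> t \in hs by move=> lt; have : [set t | l t != 0%R] t by []; rewrite hsE.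
set L := (\sum_(t <- hs) l t)%R.
have L1_gt0 : (0 < L + 1)%R by rewrite ltr_wpDl ?sumr_ge0.
apply/lee_addgt0Pr => d d_gt0; set eps := (d / (L + 1))%R.
have eps_gt0 : (0 < eps)%R by rewrite divr_gt0.
set H := [set t | l t != 0%R] `|` [set t0].
set P := ereal_inf [set f x | x in [set x | Mdom ft x /\ (forall t, H t -> ft t x <= eps%:E)]].
have P_le : P <= supFinPert f ft.
  apply: le_ereal_sup_tmp; exists P => //; exists eps, H; split => //.
  - by rewrite finite_setU; split => //; exact: finite_set1.
  - by exists t0; right.
apply: le_trans (leeD2r _ P_le); rewrite -leeBlDr //.
apply/ereal_infP => _ [x [Mx x_feas] <-]; rewrite leeBlDr //.
apply: le_trans (leeD2l (f x) (_ : _ <= d%:E)).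
  by apply: ge_ereal_inf; eexists; [exists x | exact: lexx].
rewrite (fsbig_Mdom hs_uniq l_supp Mx) lee_fin.
apply: (@le_trans _ _ (\sum_(t <- hs) l t * eps)%R).
  rewrite big_seq [leRHS]big_seq; apply: ler_sum => t t_hs.
  apply: ler_wpM2l; first exact: l_ge0.
  have /MdomP/(_ t) ftx := Mx.
  by rewrite -lee_fin (fine_proper (ft_proper t) ftx); apply: x_feas; left; rewrite hsE.
rewrite -mulr_suml -/L /eps mulrA ler_pdivrMr //; nra.
Qed.

Lemma perturbed_inf_le_supD (eps : R) (H : set T) : (0 < eps)%R -> finite_set H ->
  vbar0 f ft != +oo \/ supD f ft != -oo ->
  ereal_inf [set f x | x in [set x | Mdom ft x /\ (forall t, H t -> ft t x <= eps%:E)]]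
    <= supD f ft.
Proof.
move=> eps_gt0 H_fin supD_cases; rewrite leNgt; apply/negP => supD_lt.
have [r /andP[supD_r r_lt]] := EFin_between supD_lt.
suff : r%:E <= supD f ft by rewrite leNgt supD_r.
have [hs hs_uniq hsE] := finite_set_enum H_fin.
have feasible_gt x : Mdom ft x -> f x < +oo ->
    (forall t, t \in hs -> ft t x <= eps%:E) -> r%:E < f x.
  move=> Mx fx x_feas; apply: lt_le_trans r_lt _; apply: ge_ereal_inf.
  by exists (f x) => //; exists x => //; split => // t; rewrite hsE; exact: x_feas.
have [[x0 Dx0]|dom_empty] := pselect (exists x0, domMf x0); last first.
  by rewrite supD_empty_dom ?leey.
have [cN [c [cN_ge0 c_ge0 c_supp c_pos c_ineq]]] :=
  perturbed_alternative hs_uniq Dx0 feasible_gt.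
have c_ineq' x : Mdom ft x -> f x < +oo -> (eps * \sum_(t <- hs) c t <=
    cN * (fine (f x) - r) + \sum_(t <- hs) c t * fine (ft t x))%R.
  move=> Mx fx; have := c_ineq x Mx fx.
  have -> : (\sum_(t <- hs) c t * (fine (ft t x) - eps) =
      \sum_(t <- hs) c t * fine (ft t x) - eps * \sum_(t <- hs) c t)%R.
    by rewrite mulr_sumr -sumrB; apply: eq_bigr => t _; rewrite mulrBr [(_ * eps)%R]mulrC.
  lra.
have [cN_gt0|cN_le0] := ltrP 0 cN.
  apply: (supD_ge_scaled hs_uniq c_ge0 c_supp cN_gt0) => x Mx fx.
  have C_ge0 : (0 <= \sum_(t <- hs) c t)%R by rewrite sumr_ge0.
  by have := c_ineq' x Mx fx; have := mulr_ge0 (ltW eps_gt0) C_ge0; lra.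
have cN0 : cN = 0%R by apply/le_anti/andP.
have delta_gt0 : (0 < eps * \sum_(t <- hs) c t)%R.
  by rewrite mulr_gt0 //; move: c_pos; rewrite cN0 add0r.
have c_violation x : Mdom ft x -> f x < +oo ->
    (eps * \sum_(t <- hs) c t <= \sum_(t <- hs) c t * fine (ft t x))%R.
  by move=> Mx fx; have := c_ineq' x Mx fx; rewrite cN0 mul0r add0r.
case: supD_cases => [|supD_ninf].
  by rewrite (vbar0_pinfty c_ge0 delta_gt0 c_violation).
by rewrite (supD_pinfty hs_uniq c_ge0 c_supp delta_gt0 c_violation supD_ninf) leey.
Qed.

Lemma supFinPert_le_supD : vbar0 f ft != +oo \/ supD f ft != -oo ->
  supFinPert f ft <= supD f ft.
Proof.
move=> supD_cases; apply: ge_ereal_sup => _ [eps [H [eps_gt0 H_fin _ ->]]].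
exact: perturbed_inf_le_supD.
Qed.

End Duality.

Theorem proposition2p1 (R : realType) (X : lmodType R) (T : choiceType)
  (f : X -> \bar R) (ft : T -> X -> \bar R) :
  infinite_set [set: T] ->
  econvex f -> eproper f ->
  (forall t, econvex (ft t)) -> (forall t, eproper (ft t)) ->
  (vbar0 f ft != +oo \/ supD f ft != -oo) ->
  supD f ft = supFinPert f ft.
Proof.
move=> T_inf f_convex f_proper ft_convex ft_proper supD_cases.
have [t0 _] := infinite_setN0 T_inf.
apply/le_anti/andP; split; first exact: supD_le_supFinPert.
exact: supFinPert_le_supD.
Qed.
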